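(* Let $S$ be a simple restricted $\mathfrak{D}$-module with central charge $c$ and level $\ell \neq 0$. Assume that $m_S=2n_S>0$. If $r_S=-\infty$, then $c=1$. Moreover, $S= K^{\mathfrak{D}}$ and $K$ is a simple $\mathfrak{h}$-module.
   Context: $\mathfrak{D}$ is the mirror Heisenberg-Virasoro algebra with basis $\{d_m, h_r, \mathbf{c}_1, \mathbf{c}_2 : m\in\mathbb{Z}, r\in\frac12+\mathbb{Z}\}$ and brackets $[d_m,d_n]=(m-n)d_{m+n}+\delta_{m+n,0}\frac{m^3-m}{12}\mathbf{c}_1$, $[d_m,h_r]=-rh_{m+r}$, $[h_r,h_s]=r\delta_{r+s,0}\mathbf{c}_2$, with $\mathbf{c}_1,\mathbf{c}_2$ central. $\mathfrak{h}=\bigoplus_{r\in\frac12+\mathbb{Z}}\mathbb{C}h_r\oplus\mathbb{C}\mathbf{c}_2$ is the twisted Heisenberg subalgebra. A module is restricted if every vector is annihilated by $d_i$ and $h_{i+\frac12}$ for all sufficiently large $i$; central charge $c$ / level $\ell$ means $\mathbf{c}_1$ / $\mathbf{c}_2$ acts as $c$ / $\ell$. For a simple restricted $\mathfrak{D}$-module $S$ of level $\ell\neq0$ define: $S(r)=\{v\in S: h_{r+i+\frac12}v=0\ \forall i\ge0\}$, $n_S=\min\{r\in\mathbb{Z}: S(r)\neq0\}$, $W_0=S(n_S)$; $U(r)=\{v\in W_0: d_{r+i}v=0\ \forall i\ge0\}$, $m_S=\min\{r\in\mathbb{Z}:U(r)\neq0\}$, $U_0=U(m_S)$. Define operators on $S$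 by $L_n=\frac{1}{2\ell}\sum_{k\in\mathbb{Z}+\frac12}h_{n-k}h_k$ for $n\neq0$, $L_0=\frac{1}{2\ell}\sum_{k\in\mathbb{Z}+\frac12}h_{-|k|}h_{|k|}+\frac1{16}$, and $d'_n=d_n-L_n$ ($n\in\mathbb{Z}$); these $d'_n$ commute with all $h_r$. Let $Y_n=\bigcap_{p\ge n}\{v\in U_0: d'_pv=0\}$, $r_S=\min\{n\in\mathbb{Z}: Y_n\neq0\}$, with $r_S=-\infty$ if $Y_n\neq0$ for all $n$; $K_0=Y_{r_S}$ (for $r_S=-\infty$ this means $K_0=\{v\in U_0: d'_pv=0\ \forall p\in\mathbb{Z}\}$), and $K=U(\mathfrak{h})K_0$. For an $\mathfrak{h}$-module $H$ on which $\mathbf{c}_2$ acts as $\ell\neq0$ (restricted), $H^{\mathfrak{D}}$ denotes the $\mathfrak{D}$-module structure on $H$ given by $d_n\mapsto L_n$, $h_r\mapsto h_r$, $\mathbf{c}_1\mapsto1$, $\mathbf{c}_2\mapsto\ell$. *)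

From HB Require Import structures.
From mathcomp Require Import all_boot all_order all_algebra.
From mathcomp Require Import reals complex.
From Stdlib Require Import ClassicalEpsilon.
Set Implicit Arguments. Unset Strict Implicit. Unset Printing Implicit Defensive.
Import Order.TTheory GRing.Theory Num.Theory.
Local Open Scope ring_scope.

(* Convention: half-integer indices r in 1/2 + Z are encoded by the integer
   a with r = a + 1/2.  Thus [h a] denotes the operator h_{a + 1/2}. *)

Section MirrorHV.
Variables (R : realType) (V : lmodType R[i]).
Variables (d h : int -> V -> V) (c ell : R[i]).

Definition half : R[i] := 2^-1.

Definition hidx (a : int) : R[i] := a%:~R + half.

(* V, with operators d_m (m in Z) and h_{a+1/2} (a in Z), is a module over the
   mirror Heisenberg-Virasoro algebra with c1 acting as c and c2 as ell. *)
Definition is_D_module : Prop :=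
  (forall m a u w, d m (a *: u + w) = a *: d m u + d m w) /\
  (forall k a u w, h k (a *: u + w) = a *: h k u + h k w) /\
  (forall m n v, d m (d n v) - d n (d m v) =
      (m - n)%:~R *: d (m + n) v +
      (if m + n == 0 then (((m ^+ 3 - m)%:~R / 12%:R) * c) *: v else 0)) /\
  (forall m k v, d m (h k v) - h k (d m v) = - hidx k *: h (m + k) v) /\
  (forall k j v, h k (h j v) - h j (h k v) =
      (if hidx k + hidx j == 0 then (hidx k * ell) *: v else 0)).

Definition restricted : Prop :=
  forall v, exists N : int, forall i, N <= i -> d i v = 0 /\ h i v = 0.

Definition subspace (W : V -> Prop) : Prop :=
  W 0 /\ forall a u w, W u -> W w -> W (a *: u + w).

Definition simple_D : Prop :=
  (exists v : V, v <> 0) /\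
  forall W, subspace W ->
    (forall n v, W v -> W (d n v)) -> (forall k v, W v -> W (h k v)) ->
    (forall v, W v -> v = 0) \/ (forall v, W v).

Definition Sr (r : int) (v : V) : Prop := forall i : nat, h (r + i%:Z) v = 0.

Definition Ur (nS r : int) (v : V) : Prop :=
  Sr nS v /\ forall i : nat, d (r + i%:Z) v = 0.

Definition hbound (v : V) : int :=
  epsilon (inhabits 0) (fun N : int => forall j, N <= j -> h j v = 0).

(* window [-M, M) of integer summation indices, M large enough that every
   omitted term of the (finitely supported) sums below vanishes *)
Definition win (n : int) (v : V) : nat := (absz (hbound v) + absz n)%N.

(* L_n, n <> 0 : (1/2ell) sum_{k in Z+1/2} h_{n-k} h_k ;
   with k = a + 1/2, n - k = (n - 1 - a) + 1/2.
   L_0 : (1/2ell) sum_k h_{-|k|} h_{|k|} + 1/16 ;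
   with k = a + 1/2: |k| is index (a if a >= 0 else -a-1), -|k| is index
   (-a-1 if a >= 0 else a). *)
Definition Lop (n : int) (v : V) : V :=
  let M := win n v in
  if n != 0 then
    (2%:R * ell)^-1 *:
      \sum_(i < (M + M)%N) h (n - 1 - (i%:Z - M%:Z)) (h (i%:Z - M%:Z) v)
  else
    (2%:R * ell)^-1 *:
      \sum_(i < (M + M)%N)
        (let a := i%:Z - M%:Z in
         if 0 <= a then h (- a - 1) (h a v) else h a (h (- a - 1) v))
    + (16%:R)^-1 *: v.

Definition dprime (n : int) (v : V) : V := d n v - Lop n v.

Definition K0 (nS mS : int) (v : V) : Prop :=
  Ur nS mS v /\ forall p, dprime p v = 0.

Definition Yn (nS mS n : int) (v : V) : Prop :=
  Ur nS mS v /\ forall p, n <= p -> dprime p v = 0.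

(* K = U(h) K_0 : the smallest h-stable subspace containing K_0 *)
Definition Kmod (nS mS : int) (v : V) : Prop :=
  forall W, subspace W -> (forall k u, W u -> W (h k u)) ->
    (forall u, K0 nS mS u -> W u) -> W v.

Definition simple_h (K : V -> Prop) : Prop :=
  subspace K /\ (forall k v, K v -> K (h k v)) /\
  (exists v, K v /\ v <> 0) /\
  forall W, subspace W -> (forall v, W v -> K v) ->
    (forall k v, W v -> W (h k v)) ->
    (forall v, W v -> v = 0) \/ (forall v, K v -> W v).

End MirrorHV.

(* The Sugawara operators [L_n] satisfy [[L_n, h_k] = [d_n, h_k]], so [d'_n = d_n - L_n]
   commutes with every [h_k], hence with every [L_m]; moreover [[d_n, L_m] = (n - m) L_{n+m}]
   for [m, n + m <> 0], so the [d'_n] satisfy the Witt relations there.  A nonzero vector of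
   [Y_{-2}] is killed by [d'_{-1}] and [d'_{-2}], hence, by induction, by every [d'_p].  The
   common kernel of the [d'_p] is then a nonzero D-submodule, so [d_n = L_n] on all of [S].
   Consequently every h-submodule is L-stable, i.e. a D-submodule: this makes [K = S] and [K]
   simple over h.  Finally [[d_2, d_{-2}] = 4 d_0 + c/2] must agree with
   [[L_2, L_{-2}] = 4 L_0 + 1/2], whence [c = 1]. *)

From Pilot Require Import Defs.
From HB Require Import structures.
From mathcomp Require Import all_boot all_order all_algebra.
From mathcomp Require Import reals complex.
From mathcomp Require Import ring zify.
From Stdlib Require Import ClassicalEpsilon.
Set Implicit Arguments. Unset Strict Implicit. Unset Printing Implicit Defensive.
Import Order.TTheory GRing.Theory Num.Theory.
Local Open Scope ring_scope.

Section LinearMaps.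
Variables (K : nzRingType) (V : lmodType K).

Definition linfun_of (f : V -> V) (fL : linear f) : {linear V -> V} :=
  HB.pack_for {linear V -> V} f (GRing.isLinear.Build K V V *:%R f fL).

Variables (f : V -> V) (fL : linear f).

Lemma lin0 : f 0 = 0. Proof. exact (raddf0 (linfun_of fL)). Qed.
Lemma linD : {morph f : u w / u + w}. Proof. exact (raddfD (linfun_of fL)). Qed.
Lemma linB : {morph f : u w / u - w}. Proof. exact (raddfB (linfun_of fL)). Qed.
Lemma linZ a : {morph f : u / a *: u}. Proof. exact (linearZZ (linfun_of fL) a). Qed.
Lemma lin_sum n (F : 'I_n -> V) : f (\sum_(i < n) F i) = \sum_(i < n) f (F i).
Proof. exact (raddf_sum (linfun_of fL) _ _ F). Qed.

End LinearMaps.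

Section WindowSums.
Variables (K : nzRingType) (V : lmodType K).
Implicit Types (f g : int -> V) (M N : nat).

Definition wsum M f : V := \sum_(i < M + M) f (i%:Z - M%:Z).

Definition supported f N : Prop := forall a, a < - N%:Z \/ N%:Z <= a -> f a = 0.

Lemma sum_supported f N lo n : supported f N -> lo <= - N%:Z -> N%:Z <= lo + n%:Z ->
  \sum_(i < n) f (lo + i%:Z) = wsum N f.
Proof.
move=> fN lo_le le_hi; pose p := `|- N%:Z - lo|%N.
rewrite -(big_mkord xpredT (fun i => f (lo + i%:Z))).
rewrite (big_cat_nat _ (n := p)) //=; last by lia.
rewrite [X in _ + X](big_cat_nat _ (n := p + (N + N))) //=; [|lia|lia].
rewrite big_nat_cond big1 ?add0r; last by move=> i /andP[/andP[_ ?] _]; apply: fN; lia.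
rewrite [X in _ + X]big_nat_cond [X in _ + X]big1 ?addr0; last first.
  by move=> i /andP[/andP[? _] _]; apply: fN; lia.
rewrite -{1}(add0n p) big_addn addKn big_mkord.
by apply: eq_bigr => i _; congr f; lia.
Qed.

Lemma wsum_widen f N M : supported f N -> (N <= M)%N -> wsum M f = wsum N f.
Proof.
move=> fN NM; rewrite -(sum_supported (lo := - M%:Z) (n := M + M) fN); [|lia|lia].
by apply: eq_bigr => i _; rewrite addrC.
Qed.

Lemma wsum_eq f N1 N2 M1 M2 : supported f N1 -> supported f N2 ->
  (N1 <= M1)%N -> (N2 <= M2)%N -> wsum M1 f = wsum M2 f.
Proof.
move=> fN1 fN2 le1 le2; rewrite (wsum_widen fN1 le1) (wsum_widen fN2 le2).
by rewrite -(wsum_widen fN1 (leq_addr N2 N1)) (wsum_widen fN2 (leq_addl N1 N2)).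
Qed.

Lemma wsum_shift f N M s : supported f N -> (N + `|s| <= M)%N ->
  wsum M (fun a => f (a + s)) = wsum M f.
Proof.
move=> fN NM; rewrite (@wsum_widen f N M) //; last by lia.
rewrite -(sum_supported (lo := - M%:Z + s) (n := M + M) fN); [|lia|lia].
by apply: eq_bigr => i _; congr f; lia.
Qed.

Lemma supportedZ (x : int -> K) f N : supported f N -> supported (fun a => x a *: f a) N.
Proof. by move=> fN a /fN ->; rewrite scaler0. Qed.

Lemma eq_wsum M f g : f =1 g -> wsum M f = wsum M g.
Proof. by move=> fg; apply: eq_bigr => i _; apply: fg. Qed.

Lemma wsumD M f g : wsum M (fun a => f a + g a) = wsum M f + wsum M g.
Proof. exact: big_split. Qed.

Lemma wsumN M f : wsum M (fun a => - f a) = - wsum M f.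
Proof. exact: sumrN. Qed.

Lemma wsumB M f g : wsum M (fun a => f a - g a) = wsum M f - wsum M g.
Proof. by rewrite wsumD wsumN. Qed.

Lemma wsumZ M (x : K) f : wsum M (fun a => x *: f a) = x *: wsum M f.
Proof. by rewrite /wsum scaler_sumr. Qed.

Lemma linear_wsum (F : V -> V) : linear F -> forall M f, F (wsum M f) = wsum M (F \o f).
Proof. by move=> FL M f; rewrite /wsum (lin_sum FL). Qed.

Lemma wsum_delta M (a0 : int) (x : V) : - M%:Z <= a0 < M%:Z ->
  wsum M (fun a => if a == a0 then x else 0) = x.
Proof.
move=> /andP[lo hi]; have i0_lt : (absz (a0 + M%:Z)%R < M + M)%N by lia.
rewrite /wsum (bigD1 (Ordinal i0_lt)) //= ifT; last by apply/eqP; lia.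
rewrite big1 ?addr0 // => i /eqP i_neq; case: eqP => // ia0.
by case: i_neq; apply: val_inj => /=; lia.
Qed.

Lemma wsum_delta2 (M : nat) (a1 a2 : int) (x : V) :
  - M%:Z <= a1 < M%:Z -> - M%:Z <= a2 < M%:Z ->
  wsum M (fun a => (if a == a1 then x else 0) + (if a == a2 then x else 0)) = x + x.
Proof. by move=> ? ?; rewrite wsumD !wsum_delta. Qed.

Lemma if_eq_congr (b : bool) (a a1 : int) (x y : V) : b = (a == a1) ->
  (a = a1 -> x = y) -> (if b then x else 0) = (if a == a1 then y else 0).
Proof. by move=> -> xy; case: eqP. Qed.

End WindowSums.

Section Subspaces.
Variables (R : realType) (V : lmodType R[i]) (W : V -> Prop).
Hypothesis W_subspace : subspace W.

Lemma subspaceZ a u : W u -> W (a *: u).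
Proof. by case: W_subspace => W0 WC Wu; rewrite -[a *: u]addr0; apply: WC. Qed.

Lemma subspaceD u w : W u -> W w -> W (u + w).
Proof. by case: W_subspace => W0 WC Wu Ww; rewrite -[u]scale1r; apply: WC. Qed.

Lemma subspace_sum n (F : 'I_n -> V) : (forall i, W (F i)) -> W (\sum_(i < n) F i).
Proof.
move=> WF; elim/big_rec: _ => [|i u _ Wu]; first by case: W_subspace.
exact: subspaceD.
Qed.

End Subspaces.

Section HeisenbergSpan.
Variables (R : realType) (V : lmodType R[i]) (d h : int -> V -> V) (ell : R[i]).

Lemma Kmod_subspace nS mS : subspace (Kmod d h ell nS mS).
Proof.
split=> [W [W0 _] _ _ //|a u w Ku Kw W W_sub W_h K0W].
by case: (W_sub) => _ W_comb; apply: W_comb; [exact: (Ku W) | exact: (Kw W)].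
Qed.

Lemma Kmod_h nS mS k u : Kmod d h ell nS mS u -> Kmod d h ell nS mS (h k u).
Proof. move=> Ku W W_sub W_h K0W; exact: W_h (Ku W W_sub W_h K0W). Qed.

Lemma K0_Kmod nS mS v : K0 d h ell nS mS v -> Kmod d h ell nS mS v.
Proof. by move=> K0v W _ _; apply. Qed.

End HeisenbergSpan.

Section Sugawara.
Variables (R : realType) (V : lmodType R[i]) (h : int -> V -> V) (ell : R[i]).
Local Notation hidx := (hidx R).
Local Notation L := (Lop h ell).

Hypothesis h_linear : forall k, linear (h k).
Hypothesis h_comm : forall k j v, h k (h j v) - h j (h k v) =
  (if hidx k + hidx j == 0 then (hidx k * ell) *: v else 0).
Hypothesis h_restricted : forall v, exists N, forall j, N <= j -> h j v = 0.
Hypothesis ell_neq0 : ell != 0.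

Lemma hidxD k j : hidx k + hidx j = (k + j + 1)%:~R.
Proof.
have halfD : Defs.half R + Defs.half R = 1 by rewrite /Defs.half; field.
by rewrite /Defs.hidx !intrD -halfD; ring.
Qed.

Lemma h_swap k j v :
  h k (h j v) = h j (h k v) + (if k + j + 1 == 0 then (hidx k * ell) *: v else 0).
Proof. by have := h_comm k j v; rewrite hidxD intr_eq0 => <-; rewrite [RHS]addrC subrK. Qed.

Lemma wsum_shift_pair (G : int -> V) N M n m : supported G N -> (N + `|n| <= M)%N ->
  wsum M (fun a => - (hidx a *: G (a + n) + hidx (m - 1 - a) *: G a)) =
  (n - m)%:~R *: wsum M G.
Proof.
move=> GN NM; rewrite wsumN wsumD.
rewrite (@eq_wsum _ _ _ _ (fun a => (fun b => hidx (b - n) *: G b) (a + n))); last first.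
  by move=> a /=; rewrite addrK.
rewrite (wsum_shift (supportedZ (fun b => hidx (b - n)) GN) NM) -wsumD -wsumN -wsumZ.
apply: eq_wsum => b; rewrite -scalerDl hidxD -scaleNr -intrN.
by congr (_%:~R *: _); lia.
Qed.

Lemma h0 k : h k 0 = 0. Proof. exact: lin0. Qed.

Definition annihilated_from (v : V) (B : int) := forall j, B <= j -> h j v = 0.

Lemma hboundP v : annihilated_from v (hbound h v).
Proof.
apply: epsilon_spec; have [N hN] := h_restricted v.
by exists N.
Qed.

Lemma annihilated_from_h v B k :
  annihilated_from v B -> annihilated_from (h k v) (`|B| + `|k|)%N.
Proof.
move=> vB j hj; rewrite h_swap vB ?h0 ?add0r; last by lia.
by rewrite ifF //; apply/negbTE; lia.
Qed.

Lemma annihilated_from_comb u w Bu Bw a :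
  annihilated_from u Bu -> annihilated_from w Bw ->
  annihilated_from (a *: u + w) (`|Bu| + `|Bw|)%N.
Proof. by move=> uB wB j hj; rewrite h_linear uB ?wB ?scaler0 ?addr0 //; lia. Qed.

Definition Lterm n v a := h (n - 1 - a) (h a v).

Definition Lterm0 v (a : int) :=
  if 0 <= a then h (- a - 1) (h a v) else h a (h (- a - 1) v).

Lemma supported_Lterm n v B : n != 0 -> annihilated_from v B ->
  supported (Lterm n v) (`|B| + `|n|).
Proof.
move=> n_neq0 vB a [ha|ha]; rewrite /Lterm; last by rewrite vB ?h0 //; lia.
rewrite h_swap (vB (n - 1 - a)) ?h0 ?add0r; last by lia.
by rewrite ifF //; apply/negbTE; lia.
Qed.

Lemma supported_Lterm0 v B : annihilated_from v B -> supported (Lterm0 v) `|B|.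
Proof.
move=> vB a [ha|ha]; rewrite /Lterm0.
- by rewrite ifF ?vB ?h0 //; lia.
- by rewrite ifT ?vB ?h0 //; lia.
Qed.

Lemma LopE n v B M : n != 0 -> annihilated_from v B -> (`|B| + `|n| <= M)%N ->
  L n v = (2%:R * ell)^-1 *: wsum M (Lterm n v).
Proof.
move=> n_neq0 vB BM; rewrite /Lop n_neq0; congr (_ *: _).
change (wsum (win h n v) (Lterm n v) = wsum M (Lterm n v)).
exact: wsum_eq (supported_Lterm n_neq0 (@hboundP v)) (supported_Lterm n_neq0 vB) _ _.
Qed.

Lemma Lop0E v B M : annihilated_from v B -> (`|B| <= M)%N ->
  L 0 v = (2%:R * ell)^-1 *: wsum M (Lterm0 v) + 16%:R^-1 *: v.
Proof.
move=> vB BM; rewrite /Lop /=; congr (_ *: _ + _).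
change (wsum (win h 0 v) (Lterm0 v) = wsum M (Lterm0 v)).
apply: wsum_eq (supported_Lterm0 (@hboundP v)) (supported_Lterm0 vB) _ _ => //.
exact: leq_addr.
Qed.

Lemma Lop_linear n : linear (L n).
Proof.
move=> a u w; have uB := @hboundP u; have wB := @hboundP w.
have cB := annihilated_from_comb a uB wB.
pose M := (`|hbound h u| + `|hbound h w| + `|n|)%N.
case: (eqVneq n 0) => [->|n_neq0].
- rewrite (Lop0E uB (M := M)) ?(Lop0E wB (M := M)) ?(Lop0E cB (M := M)); try lia.
  rewrite (@eq_wsum _ _ _ _ (fun x => a *: Lterm0 u x + Lterm0 w x)); last first.
    by move=> x; rewrite /Lterm0; case: ifP => _; rewrite !h_linear.
  rewrite wsumD wsumZ !scalerDr !scalerA (mulrC a) (mulrC a).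
  by rewrite -!addrA; congr (_ + _); rewrite addrCA.
- rewrite (LopE n_neq0 uB (M := M)) ?(LopE n_neq0 wB (M := M)); try lia.
  rewrite (LopE n_neq0 cB (M := M)); last by lia.
  rewrite (@eq_wsum _ _ _ _ (fun x => a *: Lterm n u x + Lterm n w x)); last first.
    by move=> x; rewrite /Lterm !h_linear.
  by rewrite wsumD wsumZ !scalerDr !scalerA (mulrC a).
Qed.

Lemma h_hh_comm k p q v : h k (h p (h q v)) - h p (h q (h k v)) =
  (if k + p + 1 == 0 then (hidx k * ell) *: h q v else 0) +
  (if k + q + 1 == 0 then (hidx k * ell) *: h p v else 0).
Proof.
rewrite (h_swap k p) (h_swap k q) (linD (h_linear p)).
rewrite addrAC (addrAC (h p (h q (h k v)))) subrr add0r addrC.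
by congr (_ + _); case: ifP => _; rewrite ?h0 ?(linZ (h_linear p)).
Qed.

Lemma scale_half_ell (x : R[i]) (y : V) :
  (2%:R * ell)^-1 *: ((x * ell) *: y + (x * ell) *: y) = x *: y.
Proof. by rewrite -scalerDl scalerA; congr (_ *: _); field. Qed.

Lemma h_Lterm p k v a : h k (Lterm p v a) - Lterm p (h k v) a =
  (if a == k + p then (hidx k * ell) *: h (p + k) v else 0) +
  (if a == - k - 1 then (hidx k * ell) *: h (p + k) v else 0).
Proof.
rewrite /Lterm h_hh_comm; congr (_ + _); apply: if_eq_congr.
- by apply/eqP/eqP; lia.
- by move=> ->; rewrite addrC.
- by apply/eqP/eqP; lia.
- by move=> ->; congr (_ *: h _ v); lia.
Qed.

Lemma h_Lterm0 k v a : h k (Lterm0 v a) - Lterm0 (h k v) a =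
  (if a == k then (hidx k * ell) *: h k v else 0) +
  (if a == - k - 1 then (hidx k * ell) *: h k v else 0).
Proof.
rewrite /Lterm0; case: ifP => a_ge0; rewrite h_hh_comm; last rewrite addrC.
all: congr (_ + _); apply: if_eq_congr.
all: try by apply/eqP/eqP; lia.
all: by move=> ->; congr (_ *: h _ v); lia.
Qed.

Lemma Lop_h p k v : L p (h k v) = h k (L p v) - hidx k *: h (p + k) v.
Proof.
have vB := @hboundP v; have kvB := annihilated_from_h (k := k) vB.
pose M := (`|hbound h v| + `|k| + `|p| + 1)%N.
suff LhE : h k (L p v) - L p (h k v) = hidx k *: h (p + k) v.
  by rewrite -LhE opprB addrC subrK.
rewrite -scale_half_ell -(@wsum_delta2 _ _ M (k + p) (- k - 1)); [|lia|lia].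
case: (eqVneq p 0) => [p0|p_neq0].
- rewrite p0 (Lop0E vB (M := M)) ?(Lop0E kvB (M := M)); try lia.
  rewrite (linD (h_linear k)) !(linZ (h_linear k)) opprD addrACA subrr addr0.
  rewrite -scalerBr (linear_wsum (h_linear k)) -wsumB; congr (_ *: _).
  by apply: eq_wsum => a /=; rewrite h_Lterm0 addr0 add0r.
- rewrite (LopE p_neq0 vB (M := M)) ?(LopE p_neq0 kvB (M := M)); try lia.
  rewrite (linZ (h_linear k)) -scalerBr (linear_wsum (h_linear k)) -wsumB.
  by congr (_ *: _); apply: eq_wsum => a /=; rewrite h_Lterm.
Qed.

Lemma Lop_stable (W : V -> Prop) : subspace W -> (forall k u, W u -> W (h k u)) ->
  forall n u, W u -> W (L n u).
Proof.
move=> W_sub W_h n u Wu; rewrite /Lop; case: ifP => _.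
- by apply/(subspaceZ W_sub)/(subspace_sum W_sub) => i; apply/W_h/W_h.
- apply/(subspaceD W_sub)/(subspaceZ W_sub) => //.
  apply/(subspaceZ W_sub)/(subspace_sum W_sub) => i /=.
  by case: ifP => _; apply/W_h/W_h.
Qed.

Lemma Lterm0_normal v a :
  Lterm 0 v a = Lterm0 v a + (if a < 0 then hidx (-1 - a) * ell else 0) *: v.
Proof.
rewrite /Lterm /Lterm0 sub0r; case: ifP => a_ge0; rewrite ?ltNge ?a_ge0 /=.
- by rewrite scale0r addr0 addrC.
- by rewrite h_swap ifT; [congr (h _ (h _ v) + _); lia | apply/eqP; lia].
Qed.

Section Covariant.
Variable d : int -> V -> V.
Hypothesis d_linear : forall m, linear (d m).
Hypothesis d_h : forall m k v, d m (h k v) - h k (d m v) = - hidx k *: h (m + k) v.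
Local Notation dp := (dprime d h ell).

Lemma d_hE m k v : d m (h k v) = h k (d m v) - hidx k *: h (m + k) v.
Proof. by rewrite -scaleNr -d_h addrC subrK. Qed.

Lemma d_hh n p q v : d n (h p (h q v)) =
  h p (h q (d n v)) - hidx q *: h p (h (n + q) v) - hidx p *: h (n + p) (h q v).
Proof. by rewrite !d_hE (linB (h_linear p)) (linZ (h_linear p)). Qed.

Lemma annihilated_from_d n v B :
  annihilated_from v B -> annihilated_from (d n v) (`|B| + `|n|)%N.
Proof.
move=> vB j hj; have := d_hE n j v; rewrite vB ?(lin0 (d_linear n)); last by lia.
by rewrite vB ?scaler0 ?subr0 //; lia.
Qed.

Lemma dprime_linear p : linear (dp p).
Proof.
move=> a u w; rewrite /dprime d_linear Lop_linear scalerBr.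
by rewrite opprD !addrA; congr (_ + _); rewrite addrAC.
Qed.

Lemma dprime_h p k v : dp p (h k v) = h k (dp p v).
Proof. by rewrite /dprime d_hE Lop_h (linB (h_linear k)) opprB addrA subrK. Qed.

Lemma annihilated_from_dprime p v B :
  annihilated_from v B -> annihilated_from (dp p v) B.
Proof. by move=> vB j hj; rewrite -dprime_h vB // (lin0 (dprime_linear p)). Qed.

Lemma dprime_Lop p n v : dp p (L n v) = L n (dp p v).
Proof.
have vB := @hboundP v; have pvB := annihilated_from_dprime p vB.
pose M := (`|hbound h v| + `|n|)%N.
have dpL := dprime_linear p.
case: (eqVneq n 0) => [->|n_neq0].
- rewrite (Lop0E vB (M := M)) ?(Lop0E pvB (M := M)); try lia.
  rewrite (linD dpL) !(linZ dpL) (linear_wsum dpL); congr (_ *: _ + _).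
  by apply: eq_wsum => a; rewrite /Lterm0 /=; case: ifP => _; rewrite !dprime_h.
- rewrite (LopE n_neq0 vB (M := M)) ?(LopE n_neq0 pvB (M := M)); try lia.
  rewrite (linZ dpL) (linear_wsum dpL); congr (_ *: _).
  by apply: eq_wsum => a; rewrite /Lterm /= !dprime_h.
Qed.

Lemma d_Lterm n m v a : d n (Lterm m v a) - Lterm m (d n v) a =
  - (hidx a *: Lterm (n + m) v (a + n) + hidx (m - 1 - a) *: Lterm (n + m) v a).
Proof.
rewrite /Lterm d_hh addrAC (addrAC (h _ (h a (d n v)))) subrr add0r -opprD.
by congr (- (_ *: h _ (h _ v) + _ *: h _ _)); lia.
Qed.

Lemma d_Lop n m v : m != 0 -> n + m != 0 ->
  d n (L m v) - L m (d n v) = (n - m)%:~R *: L (n + m) v.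
Proof.
move=> m_neq0 nm_neq0; have vB := @hboundP v; have dvB := annihilated_from_d (n := n) vB.
pose M := (`|hbound h v| + `|n| + `|m| + `|(n + m)%R|)%N.
rewrite (LopE m_neq0 vB (M := M)) ?(LopE m_neq0 dvB (M := M)); try lia.
rewrite (LopE nm_neq0 vB (M := M)); last by lia.
rewrite (linZ (d_linear n)) -scalerBr (linear_wsum (d_linear n)) -wsumB.
rewrite (eq_wsum _ (d_Lterm n m v)) (wsum_shift_pair _ (supported_Lterm nm_neq0 vB)).
  by rewrite !scalerA mulrC.
by lia.
Qed.

Lemma d2_scalar a :
  - (hidx a * (if a + 2 < 0 then hidx (-1 - (a + 2)) * ell else 0) +
     hidx (-2 - 1 - a) * (if a < 0 then hidx (-1 - a) * ell else 0)) =
  (if a == -2 then 3%:R / 4%:R * ell else 0) + (if a == -1 then 3%:R / 4%:R * ell else 0).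
Proof.
rewrite /Defs.hidx /Defs.half.
have [a_le|[->|[->|a_ge]]] : a <= -3 \/ a = -2 \/ a = -1 \/ 0 <= a by lia.
- have -> : a + 2 < 0 by lia.
  have -> : a < 0 by lia.
  have /negbTE -> : a != -2 by lia.
  have /negbTE -> : a != -1 by lia.
  by rewrite !intrD !intrN addr0; field.
- by rewrite /= addr0; field.
- by rewrite /= add0r; field.
- have /negbTE -> : ~~ (a + 2 < 0) by lia.
  have /negbTE -> : ~~ (a < 0) by lia.
  have /negbTE -> : a != -2 by lia.
  have /negbTE -> : a != -1 by lia.
  by rewrite !mulr0 addr0 oppr0.
Qed.

Lemma d2_Lterm_m2 v a : d 2 (Lterm (-2) v a) - Lterm (-2) (d 2 v) a =
  - (hidx a *: Lterm0 v (a + 2) + hidx (-2 - 1 - a) *: Lterm0 v a) +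
  ((if a == -2 then (3%:R / 4%:R * ell) *: v else 0) +
   (if a == -1 then (3%:R / 4%:R * ell) *: v else 0)).
Proof.
have split_scalars (x y c1 c2 : R[i]) (N1 N2 : V) :
    - (x *: (N1 + c1 *: v) + y *: (N2 + c2 *: v)) =
    - (x *: N1 + y *: N2) + (- (x * c1 + y * c2)) *: v.
  by rewrite !scalerDr !scalerA addrACA opprD scaleNr scalerDl.
rewrite d_Lterm (_ : 2 + -2 = 0) // !Lterm0_normal split_scalars d2_scalar.
by congr (_ + _); rewrite scalerDl; congr (_ + _); case: ifP; rewrite ?scale0r.
Qed.

(* The constant [1/2 = (2^3 - 2)/12] is the central term of charge [1]. *)
Lemma d2_Lop_m2 v : d 2 (L (-2) v) - L (-2) (d 2 v) = 4%:R *: L 0 v + 2^-1 *: v.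
Proof.
have vB := @hboundP v.
have dvB : annihilated_from (d 2 v) (`|hbound h v| + 2)%N := annihilated_from_d vB.
pose M := (`|hbound h v| + 4)%N.
rewrite (LopE _ vB (M := M)) ?(LopE _ dvB (M := M)) ?(Lop0E vB (M := M)) //; try lia.
rewrite (linZ (d_linear 2)) -scalerBr (linear_wsum (d_linear 2)) -wsumB.
have shiftM : (`|hbound h v| + `|2%R| <= M)%N by rewrite leq_add2l.
rewrite (eq_wsum _ (d2_Lterm_m2 v)) wsumD (wsum_shift_pair _ (supported_Lterm0 vB) shiftM).
rewrite wsum_delta2; [|lia|lia].
rewrite [(2 - -2)%:~R](_ : _ = 4%:R) // scalerDr scale_half_ell scalerA.
rewrite scalerDr !scalerA -addrA -scalerDl.
by congr (_ *: _ + _ *: _); [rewrite mulrC | field].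
Qed.

Section Virasoro.
Variable c : R[i].
Hypothesis d_comm : forall m n v, d m (d n v) - d n (d m v) =
  (m - n)%:~R *: d (m + n) v +
  (if m + n == 0 then (((m ^+ 3 - m)%:~R / 12%:R) * c) *: v else 0).

Lemma dprime_comm m n v : m != 0 -> n + m != 0 ->
  dp m (dp n v) - dp n (dp m v) = (m - n)%:~R *: dp (m + n) v.
Proof.
move=> m_neq0 nm_neq0.
have -> : dp m (dp n v) = d m (d n v) - L m (d n v) - L n (dp m v).
  by rewrite [dp n v]/dprime (linB (dprime_linear m)) dprime_Lop.
have -> : dp n (dp m v) = d n (d m v) - d n (L m v) - L n (dp m v).
  by rewrite /dprime (linB (d_linear n)).
rewrite opprB addrA subrK opprB (addrC (d n (L m v))) addrACA (addrC (- L m (d n v))).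
have mn_neq0 : m + n != 0 by rewrite addrC.
rewrite d_comm d_Lop // (negbTE mn_neq0).
have -> : (n - m)%:~R = - (m - n)%:~R :> R[i] by rewrite -intrN opprB.
by rewrite addr0 (addrC n m) /dprime scalerBr scaleNr.
Qed.

(* [d'_{-1}] lowers the index: [[d'_{-1}, d'_p] = (-1 - p) d'_{p-1}] for [p <= -2]. *)
Lemma dprime_vanish v : (forall p, -2 <= p -> dp p v = 0) -> forall p, dp p v = 0.
Proof.
move=> v_ge.
have dp_below (k : nat) : dp (-2 - k%:Z) v = 0.
  elim: k => [|k IHk]; first by apply: v_ge; lia.
  have nm_neq0 : -2 - k%:Z + -1 != 0 by lia.
  have := dprime_comm (m := -1) v isT nm_neq0.
  rewrite IHk (v_ge (-1)) // !(lin0 (dprime_linear _)) subrr => /esym/eqP.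
  rewrite scaler_eq0 intr_eq0 => /orP[/eqP|/eqP]; first lia.
  by rewrite (_ : -1 + _ = -2 - k.+1%:Z) //; lia.
move=> p; case: (lerP (-2) p) => [/v_ge //|p_lt].
by rewrite -(dp_below (absz (-2 - p)%R)); congr dp; lia.
Qed.

Lemma central_charge_eq1 (v : V) : (forall n u, d n u = L n u) -> v <> 0 -> c = 1.
Proof.
move=> dL /eqP v_neq0; have := d_comm (-2) 2 v.
rewrite [d (-2) _]dL [d (-2) v]dL -opprB d2_Lop_m2 (_ : -2 + 2 = 0 :> int) // eqxx -dL.
rewrite [(-2 - 2)%:~R](_ : _ = - 4%:R) // [((-2) ^+ 3 - -2)%:~R](_ : _ = - 6%:R) //.
rewrite opprD scaleNr => /addrI /eqP; rewrite -scaleNr -subr_eq0 -scalerBl scaler_eq0.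
rewrite (negbTE v_neq0) orbF => /eqP c_eq.
have : c - 1 = 2%:R * (- 2^-1 - - 6%:R / 12%:R * c) by field.
by rewrite c_eq mulr0 => /eqP; rewrite subr_eq0 => /eqP.
Qed.

Section Simple.
Hypothesis D_simple : simple_D d h.

Lemma d_eq_Lop v0 : v0 <> 0 -> (forall p, dp p v0 = 0) -> forall n v, d n v = L n v.
Proof.
move=> v0_neq0 v0_ker; pose W v := forall p, dp p v = 0.
have W_sub : subspace W.
  split=> [p|a u w Wu Ww p]; first exact: lin0 (dprime_linear p).
  by rewrite dprime_linear Wu Ww scaler0 addr0.
have W_h k v : W v -> W (h k v) by move=> Wv p; rewrite dprime_h Wv h0.
have dL_W n v : W v -> d n v = L n v by move=> /(_ n) /eqP; rewrite subr_eq0 => /eqP.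
have W_d n v : W v -> W (d n v).
  by move=> Wv p; rewrite dL_W // dprime_Lop Wv (lin0 (Lop_linear n)).
case: (D_simple.2 W W_sub W_d W_h) => [W0|W_all]; last by move=> n v; apply: dL_W.
by case: v0_neq0; apply: W0.
Qed.

Section SugawaraModule.
Hypothesis dL : forall n v, d n v = L n v.

Lemma hsubmodule_trivial W : subspace W -> (forall k u, W u -> W (h k u)) ->
  (forall v, W v -> v = 0) \/ (forall v, W v).
Proof.
move=> W_sub W_h; apply: D_simple.2 => // n u Wu.
by rewrite dL; apply: Lop_stable.
Qed.

Lemma Kmod_full nS mS v0 : K0 d h ell nS mS v0 -> v0 <> 0 -> forall v, Kmod d h ell nS mS v.
Proof.
move=> K0v0 v0_neq0.
have [K0_eq0|//] := hsubmodule_trivial (Kmod_subspace d h ell nS mS) (@Kmod_h _ _ d h ell nS mS).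
by case: v0_neq0; apply: K0_eq0; apply: K0_Kmod.
Qed.

Lemma simple_h_Kmod nS mS v0 : K0 d h ell nS mS v0 -> v0 <> 0 -> simple_h h (Kmod d h ell nS mS).
Proof.
move=> K0v0 v0_neq0; split; first exact: Kmod_subspace.
split; first exact: Kmod_h.
split; first by exists v0; split => //; apply: K0_Kmod.
move=> W W_sub _ W_h; have [W0|W_all] := hsubmodule_trivial W_sub W_h; first by left.
by right=> v _; apply: W_all.
Qed.

End SugawaraModule.
End Simple.
End Virasoro.
End Covariant.
End Sugawara.

Unset Implicit Arguments.

Theorem proposition4p4 (R : realType) (V : lmodType R[i])
    (d h : int -> V -> V) (c ell : R[i]) (nS mS : int) :
  is_D_module d h c ell ->
  restricted d h ->
  simple_D d h ->
  ell != 0 ->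
  (* n_S = min { r in Z : S(r) <> 0 } *)
  (exists v, Sr h nS v /\ v <> 0) ->
  (forall r, r < nS -> forall v, Sr h r v -> v = 0) ->
  (* m_S = min { r in Z : U(r) <> 0 } *)
  (exists v, Ur d h nS mS v /\ v <> 0) ->
  (forall r, r < mS -> forall v, Ur d h nS r v -> v = 0) ->
  (* m_S = 2 n_S > 0 *)
  mS = 2%:Z * nS -> 0 < mS ->
  (* r_S = -oo : Y_n <> 0 for every n *)
  (forall n, exists v, Yn d h ell nS mS n v /\ v <> 0) ->
  c = 1 /\
  (forall v, Kmod d h ell nS mS v) /\
  (forall n v, d n v = Lop h ell n v) /\
  simple_h h (Kmod d h ell nS mS).
Proof.
move=> [d_lin [h_lin [d_comm [d_h h_comm]]]] D_res D_simple ell_neq0 _ _ _ _ _ _ Y_nonzero.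
have h_res v : exists N, forall j, N <= j -> h j v = 0.
  by have [N resN] := D_res v; exists N => j /resN [].
have [v0 [[U_v0 dp_v0] v0_neq0]] := Y_nonzero (-2).
have dp_v0_all := dprime_vanish h_lin h_comm h_res ell_neq0 d_lin d_h d_comm dp_v0.
have K0_v0 : K0 d h ell nS mS v0 by split.
have dL := d_eq_Lop h_lin h_comm h_res ell_neq0 d_lin d_h D_simple v0_neq0 dp_v0_all.
split; first exact: (central_charge_eq1 h_lin h_comm h_res ell_neq0 d_lin d_h d_comm dL v0_neq0).
split; first exact: (Kmod_full D_simple dL K0_v0 v0_neq0).
by split; [exact: dL | exact: (simple_h_Kmod D_simple dL K0_v0 v0_neq0)].
Qed.
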